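(* Let $G$ be a connected cubic graph on $n$ vertices with $n\equiv 0\pmod 4$. If $G$ has a Xuong tree whose cotree has a unique odd component and this component has at least three edges, then $G$ admits a coherent stable decycling partition, i.e. a partition $\{A,J\}$ of $V(G)$ such that $G[A]$ is a tree and $J$ is independent or near-independent.
   Context: Graphs are finite; loops and multiple edges allowed; a cubic graph is $3$-regular. For connected $G$, $\beta(G)=|E(G)|-|V(G)|+1$; $\gamma_M(G)$ is the largest genus of a closed orientable surface on which $G$ has a cellular embedding; $\xi(G)=\beta(G)-2\gamma_M(G)$. For a spanning tree $T$ the cotree is $G-E(T)$; a component is odd if it has an odd number of edges; $T$ is a Xuong tree if its cotree has exactly $\xi(G)$ odd components. $J$ is independent if $G[J]$ has no edges and near-independent if $G[J]$ has exactly one edge. *)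

(* A finite multigraph (loops and parallel edges allowed) is
   given by a vertex finType V, an edge finType E and an endpoint map
   ends : E -> V * V (a loop is an edge e with (ends e).1 = (ends e).2). *)
From mathcomp Require Import all_boot all_order all_algebra all_fingroup.
Set Implicit Arguments.
Unset Strict Implicit.
Unset Printing Implicit Defensive.

Section Graph.
Variables (V E : finType) (ends : E -> V * V).

Definition joins (e : E) (x y : V) : bool :=
  (ends e == (x, y)) || (ends e == (y, x)).

(* degree of v; a loop at v counts twice *)
Definition deg (v : V) : nat :=
  #|[set e | (ends e).1 == v]| + #|[set e | (ends e).2 == v]|.

Definition cubic : Prop := forall v, deg v = 3.

Definition adj_in (A : {set V}) (F : {set E}) : rel V :=
  [rel x y | [&& x \in A, y \in A & [exists e in F, joins e x y]]].

Definition connected_in (A : {set V}) (F : {set E}) : Prop :=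
  A != set0 /\ forall x y, x \in A -> y \in A -> connect (adj_in A F) x y.

Definition connected : Prop := connected_in setT setT.

(* F contains a cycle: k+1 >= 1 distinct edges es_0..es_k and distinct
   vertices vs_0..vs_k with es_i joining vs_i and vs_{i+1 mod k+1}
   (a loop is a cycle of length 1, two parallel edges one of length 2) *)
Definition has_cycle_in (F : {set E}) : Prop :=
  exists (k : nat) (es : 'I_k.+1 -> E) (vs : 'I_k.+1 -> V),
    [/\ injective es, injective vs,
        forall i, es i \in F &
        forall i, joins (es i) (vs i) (vs (ordS i))].

Definition induced_edges (A : {set V}) : {set E} :=
  [set e | ((ends e).1 \in A) && ((ends e).2 \in A)].

Definition tree_in (A : {set V}) (F : {set E}) : Prop :=
  connected_in A F /\ ~ has_cycle_in F.

Definition induced_tree (A : {set V}) : Prop := tree_in A (induced_edges A).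

Definition spanning_tree (T : {set E}) : Prop := tree_in setT T.

Definition independent (J : {set V}) : Prop := induced_edges J = set0.
Definition near_independent (J : {set V}) : Prop := #|induced_edges J| = 1.

Definition comp_of (F : {set E}) (v : V) : {set V} :=
  [set u | connect (adj_in setT F) v u].
Definition comps (F : {set E}) : {set {set V}} := [set comp_of F v | v in V].
Definition comp_edges (F : {set E}) (C : {set V}) : {set E} :=
  [set e in F | (ends e).1 \in C].
Definition odd_comps (F : {set E}) : {set {set V}} :=
  [set C in comps F | odd #|comp_edges F C|].
Definition cotree (T : {set E}) : {set E} := ~: T.

(* darts: (e, true) is e leaving (ends e).1, (e, false) leaving (ends e).2 *)
Local Notation dart := (E * bool)%type.
Definition dtail (d : dart) : V := if d.2 then (ends d.1).1 else (ends d.1).2.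
Definition dinv (d : dart) : dart := (d.1, ~~ d.2).

Definition rotation (rho : {perm dart}) : bool :=
  [forall d, dtail (rho d) == dtail d] &&
  [forall d, forall d', (dtail d == dtail d') ==> fconnect rho d d'].

(* number of faces of the embedding = orbits of rho o dinv *)
Definition faces (rho : {perm dart}) : nat :=
  fcard (fun d => rho (dinv d)) (@predT dart).

(* Euler's formula: |V| - |E| + F = 2 - 2 g *)
Definition genus (rho : {perm dart}) : nat :=
  (2 + #|E| - #|V| - faces rho)./2.

Definition max_genus : nat := \max_(rho : {perm dart} | rotation rho) genus rho.

Definition xi : int := (Posz #|E| - Posz #|V| + 1 - 2 * Posz max_genus)%R.

Definition xuong_tree (T : {set E}) : Prop :=
  spanning_tree T /\ Posz #|odd_comps (cotree T)| = xi.

End Graph.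

(* Let F be the cotree of T. Its only odd component C has at least three edges,
   so some z in C meets two edges of F. Orient F so that every vertex other than
   z has even in-degree: in an orientation minimising the number of such odd
   vertices, reversing a path from an odd x <> z to z or to another odd vertex
   would lower that number, so x would be the only odd vertex of its component;
   as in-degrees sum to the number of edges, that component would be odd, i.e.
   equal to C, which contains z.
   Let J be the set of heads of edges of F. Every vertex of J meets two edges of
   F, hence at most one edge of T since G is cubic: J consists of leaves of T.
   Every edge of F has its head in J, so G[V \ J] is T with some leaves removed,
   a tree. An edge of G[J] lies in F; a vertex of J other than z has all its
   F-edges incoming, so every edge of G[J] leaves z, and z has at most one such
   edge. *)

From mathcomp Require Import all_boot all_order all_algebra all_fingroup.
From mathcomp Require Import zify.
Set Implicit Arguments.
Unset Strict Implicit.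
Unset Printing Implicit Defensive.

Section Multigraph.
Variables (V E : finType) (ends : E -> V * V).
Implicit Types (v x y : V) (e : E) (F T : {set E}).

Definition edges_at v : {set E} := [set e | ((ends e).1 == v) || ((ends e).2 == v)].

Definition leaf T v : bool := #|edges_at v :&: T| <= 1.

Lemma card_edges_at_loops v :
  #|edges_at v| + #|[set e | ends e == (v, v)]| = deg ends v.
Proof.
rewrite /deg -(cardsUI [set e | (ends e).1 == v]).
by congr (_ + _); apply: eq_card => e; rewrite !inE // -xpair_eqE -surjective_pairing.
Qed.

Lemma cubic_card_edges_at v : cubic ends -> #|edges_at v| <= 3.
Proof. by move=> cub; rewrite -(cub v) -card_edges_at_loops leq_addr. Qed.

Lemma cubic_loop_card_edges_at e v :
  cubic ends -> ends e = (v, v) -> #|edges_at v| <= 2.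
Proof.
move=> cub loop_e; have := card_edges_at_loops v; rewrite cub.
have : 0 < #|[set e | ends e == (v, v)]|.
  by apply/card_gt0P; exists e; rewrite inE loop_e.
lia.
Qed.

Lemma card_edges_at_cotree T v :
  #|edges_at v :&: T| + #|edges_at v :&: cotree T| = #|edges_at v|.
Proof. by rewrite /cotree -setDE cardsID. Qed.

Lemma cubic_leaf_cotree T v : cubic ends -> ~~ leaf (cotree T) v -> leaf T v.
Proof.
move=> G_cubic; have := cubic_card_edges_at v G_cubic.
rewrite /leaf -(card_edges_at_cotree T); lia.
Qed.

Lemma joinsC e x y : joins ends e x y = joins ends e y x.
Proof. by rewrite /joins orbC. Qed.

Lemma joins_ends e : joins ends e (ends e).1 (ends e).2.
Proof. by rewrite /joins -surjective_pairing eqxx. Qed.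

Lemma joins_edges_atl e x y : joins ends e x y -> e \in edges_at x.
Proof. by rewrite /joins !inE => /orP[]/eqP ->; rewrite eqxx ?orbT. Qed.

Lemma joins_edges_atr e x y : joins ends e x y -> e \in edges_at y.
Proof. by rewrite joinsC; apply: joins_edges_atl. Qed.

Lemma joins_mem2 e x y u w : joins ends e x y -> joins ends e u w -> y \in [set u; w].
Proof.
rewrite /joins => /orP[]/eqP-> /orP[]/eqP[<- <-]; by rewrite !inE eqxx ?orbT.
Qed.

Lemma joins_other_eq e x y w : joins ends e x y -> joins ends e y w -> x = w.
Proof. by rewrite /joins => /orP[]/eqP-> /orP[]/eqP[] *; congruence. Qed.

Lemma adj_inP (S : {set V}) F x y :
  reflect [/\ x \in S, y \in S & exists2 e, e \in F & joins ends e x y]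
          (adj_in ends S F x y).
Proof.
apply: (iffP and3P) => [[xS yS /existsP[e /andP[eF je]]]|[xS yS [e eF je]]].
  by split=> //; exists e.
by split=> //; apply/existsP; exists e; rewrite eF.
Qed.

Lemma adj_inC (S : {set V}) F : symmetric (adj_in ends S F).
Proof.
by move=> x y; apply/adj_inP/adj_inP => -[xS yS [e eF je]];
  split=> //; exists e; rewrite // joinsC.
Qed.

Lemma adj_in_closed (S W : {set V}) F x y :
  (forall a b, a \in W -> adj_in ends S F a b -> b \in W) ->
  connect (adj_in ends S F) x y -> x \in W -> y \in W.
Proof.
move=> clW xy; have sym := sym_connect_sym (adj_inC S F).
have clos : closed (adj_in ends S F) W.
  by apply: intro_closed => // a b ab aW; apply: clW ab.
by rewrite (closed_connect clos xy).
Qed.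

Lemma leafP T v g1 g2 :
  leaf T v -> g1 \in edges_at v :&: T -> g2 \in edges_at v :&: T -> g1 = g2.
Proof. by move=> /card_le1_eqP le1 g1v g2v; apply: le1. Qed.

End Multigraph.

Section Components.
Variables (V E : finType) (ends : E -> V * V) (F : {set E}).

Lemma adj_in_ends e : e \in F -> adj_in ends setT F (ends e).1 (ends e).2.
Proof. by move=> eF; apply/adj_inP; split=> //; exists e => //; apply: joins_ends. Qed.

Lemma mem_comp_of x : x \in comp_of ends F x.
Proof. by rewrite inE connect0. Qed.

Lemma comps_eq K x : K \in comps ends F -> x \in K -> K = comp_of ends F x.
Proof.
case/imsetP => c _ -> cx; apply/setP => y; rewrite inE in cx; rewrite !inE.
by rewrite (same_connect (sym_connect_sym (adj_inC ends setT F)) cx).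
Qed.

Lemma comp_of_ends x e : e \in F ->
  ((ends e).1 \in comp_of ends F x) = ((ends e).2 \in comp_of ends F x).
Proof.
move=> eF; rewrite !inE.
exact: (same_connect_r (sym_connect_sym (adj_inC ends setT F)) (connect1 (adj_in_ends eF)) x).
Qed.

Lemma comps_leaves_card_edges K : K \in comps ends F ->
  {in K, forall v, leaf ends F v} -> #|comp_edges ends F K| <= 1.
Proof.
move=> Kc Kleaf; apply/card_le1_eqP => f1 f2.
suff only_e1 e1 f : e1 \in comp_edges ends F K -> f \in comp_edges ends F K -> f = e1.
  by move=> f1K f2K; rewrite (only_e1 f1 f2 f1K f2K).
rewrite !inE => /andP[e1F aK] /andP[fF fK].
set a := (ends e1).1 in aK; set b := (ends e1).2.
have bK : b \in K by rewrite (comps_eq Kc aK) -comp_of_ends // -(comps_eq Kc aK).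
have e1_at x : x \in [set a; b] -> e1 \in edges_at ends x :&: F.
  rewrite in_setI e1F andbT => /set2P[]->.
    exact: joins_edges_atl (joins_ends ends e1).
  exact: joins_edges_atr (joins_ends ends e1).
have at_ab f' x : f' \in F -> x \in [set a; b] -> f' \in edges_at ends x -> f' = e1.
  move=> f'F xab f'x; apply: leafP (Kleaf x _) _ (e1_at x xab); last by rewrite inE f'x f'F.
  by case/set2P: xab => ->.
have ab_closed x y : x \in [set a; b] -> adj_in ends setT F x y -> y \in [set a; b].
  move=> xab /adj_inP[_ _ [f' f'F jf']].
  have f'e1 := at_ab f' x f'F xab (joins_edges_atl jf'); rewrite f'e1 in jf'.
  exact: joins_mem2 jf' (joins_ends ends e1).
apply: (at_ab f (ends f).1 fF); last by rewrite inE eqxx.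
rewrite (comps_eq Kc aK) inE in fK.
exact: adj_in_closed ab_closed fK (set21 a b).
Qed.

End Components.

Section SpanningTree.
Variables (V E : finType) (ends : E -> V * V) (T : {set E}).
Hypotheses (T_span : spanning_tree ends T) (V_gt2 : 2 < #|V|).

Lemma spanning_tree_edges_at v : 0 < #|edges_at ends v :&: T|.
Proof.
have [u uv] : exists u, u != v.
  have : 0 < #|[set~ v]| by rewrite cardsC1; lia.
  by case/card_gt0P => u; rewrite !inE; exists u.
case: T_span => [[_ T_conn] _].
have /connectP[[|y p] /= pth uE] := T_conn v u (in_setT v) (in_setT u).
  by rewrite uE eqxx in uv.
case/andP: pth => /adj_inP[_ _ [g gT jg]] _.
by apply/card_gt0P; exists g; rewrite inE gT (joins_edges_atl jg).
Qed.

Lemma spanning_tree_adjacent_leaves g u w :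
  g \in T -> joins ends g u w -> leaf ends T u -> leaf ends T w -> False.
Proof.
move=> gT jg lu lw.
have uw_closed a b : a \in [set u; w] -> adj_in ends setT T a b -> b \in [set u; w].
  move=> /set2P aS /adj_inP[_ _ [g' g'T jg']].
  suff eg : g' = g by rewrite eg in jg'; apply: joins_mem2 jg' jg.
  case: aS => ?; subst a.
    apply: leafP lu _ _; rewrite in_setI ?g'T ?gT !andbT.
      exact: joins_edges_atl jg'.
    exact: joins_edges_atl jg.
  apply: leafP lw _ _; rewrite in_setI ?g'T ?gT !andbT.
    exact: joins_edges_atl jg'.
  exact: joins_edges_atr jg.
have : [set: V] \subset [set u; w].
  apply/subsetP => v _; case: T_span => [[_ T_conn] _].
  exact: adj_in_closed uw_closed (T_conn u v (in_setT u) (in_setT v)) (set21 u w).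
move/subset_leq_card; rewrite cardsT cards2.
have : (u != w).+1 <= 2 by case: (u != w).
lia.
Qed.

Lemma leaf_free_path (L : {set V}) x p : {in L, forall v, leaf ends T v} ->
  path (adj_in ends setT T) x p -> uniq (x :: p) -> x \notin L -> last x p \notin L ->
  path (adj_in ends (~: L) (induced_edges ends (~: L))) x p.
Proof.
move=> Lleaf; elim: p x => [|y p IH] x //= /andP[xy pth] /andP[xp uq] xL lastL.
have yL : y \notin L.
  case: p pth xp uq lastL IH => [|s p] //= /andP[ys _] xp _ _ _.
  apply/negP => yL; case/adj_inP: xy => _ _ [g1 g1T j1].
  case/adj_inP: ys => _ _ [g2 g2T j2].
  have eg : g1 = g2.
    apply: leafP (Lleaf y yL) _ _; rewrite in_setI ?g1T ?g2T !andbT.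
      exact: joins_edges_atr j1.
    exact: joins_edges_atl j2.
  rewrite eg in j1; move: xp; by rewrite (joins_other_eq j1 j2) !inE eqxx ?orbT.
rewrite (IH y pth uq yL lastL) andbT; apply/adj_inP; split; rewrite ?inE //.
case/adj_inP: xy => _ _ [g gT jg]; exists g => //.
by rewrite inE; case/orP: jg => /eqP -> /=; rewrite !inE xL yL.
Qed.

Lemma induced_tree_setC_leaves (L : {set V}) :
  {in L, forall v, leaf ends T v} -> induced_edges ends (~: L) \subset T ->
  induced_tree ends (~: L).
Proof.
move=> Lleaf indT; case: T_span => [[V_nonempty T_conn] T_acyc].
split; [split|].
- have [v _] := set0Pn _ V_nonempty.
  have [g] := card_gt0P (spanning_tree_edges_at v); rewrite inE => /andP[_ gT].
  apply/set0Pn; case: (boolP ((ends g).1 \in L)) => aL; last by exists (ends g).1; rewrite inE.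
  case: (boolP ((ends g).2 \in L)) => bL; last by exists (ends g).2; rewrite inE.
  by case: (spanning_tree_adjacent_leaves gT (joins_ends ends g) (Lleaf _ aL) (Lleaf _ bL)).
- move=> x y; rewrite !inE => xL.
  have /connectP[p pth ->] := T_conn x y (in_setT x) (in_setT y).
  case: (shortenP pth) => p' pth' uq _ lastL.
  by apply/connectP; exists p' => //; apply: leaf_free_path.
- case=> [k [es [vs [? ? esL ?]]]]; apply: T_acyc.
  by exists k, es, vs; split=> // i; apply: (subsetP indT).
Qed.

Lemma cubic_cotree_card_edges_at v :
  cubic ends -> #|edges_at ends v :&: cotree T| <= 2.
Proof.
move=> G_cubic; have := cubic_card_edges_at v G_cubic.
have := spanning_tree_edges_at v; rewrite -(card_edges_at_cotree ends T); lia.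
Qed.

End SpanningTree.

Section Orientation.
Variables (V E : finType) (ends : E -> V * V) (F : {set E}).
Implicit Types (o : {ffun E -> bool}) (e : E) (v x y : V).

Definition dhead o e := if o e then (ends e).1 else (ends e).2.
Definition dtail o e := if o e then (ends e).2 else (ends e).1.
Definition in_edges o v := [set e in F | dhead o e == v].
Definition indeg o v := #|in_edges o v|.
Definition reorient o e0 : {ffun E -> bool} :=
  [ffun e => if e == e0 then ~~ o e else o e].

Lemma joins_dtail_dhead o e : joins ends e (dtail o e) (dhead o e).
Proof. by rewrite /dtail /dhead; case: (o e); [rewrite joinsC|]; apply: joins_ends. Qed.

Lemma in_edges_sub o v : in_edges o v \subset edges_at ends v :&: F.
Proof.
apply/subsetP => e; rewrite /in_edges inE => /andP[eF /eqP <-]; rewrite in_setI eF andbT.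
exact: joins_edges_atr (joins_dtail_dhead o e).
Qed.

Lemma odd_indeg_reorient o e0 v : e0 \in F ->
  odd (indeg (reorient o e0) v) =
  odd (indeg o v) (+) (v == (ends e0).1) (+) (v == (ends e0).2).
Proof.
move=> e0F; rewrite /indeg /in_edges.
rewrite (cardsD1 e0 (in_edges (reorient o e0) v)) (cardsD1 e0 (in_edges o v)).
have -> : in_edges (reorient o e0) v :\ e0 = in_edges o v :\ e0.
  by apply/setP => e; rewrite !inE /dhead ffunE; case: eqVneq.
rewrite !oddD !inE e0F /dhead ffunE eqxx ![_ == v]eq_sym.
set b := odd #|_ :\ e0|; by case: (o e0); case: (v == _); case: (v == _); case: b.
Qed.

Lemma connect_reorient o x y : connect (adj_in ends setT F) x y ->
  exists o', forall v, odd (indeg o' v) = odd (indeg o v) (+) (v == x) (+) (v == y).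
Proof.
case/connectP => p + ->; elim: p x => [|y' p IH] x /=.
  by move=> _; exists o => v; rewrite -addbA addbb addbF.
case/andP => /adj_inP[_ _ [e eF je]] /IH[o' Ho'].
exists (reorient o' e) => v; rewrite odd_indeg_reorient // Ho'.
by case/orP: je => /eqP-> /=; case: (v == x); case: (v == y'); case: (v == _); case: (odd _).
Qed.

Lemma sum_indeg o (K : {set V}) :
  {in F, forall e, ((ends e).1 \in K) = ((ends e).2 \in K)} ->
  \sum_(v in K) indeg o v = #|comp_edges ends F K|.
Proof.
move=> K_closed.
have -> : comp_edges ends F K = [set e in F | dhead o e \in K].
  apply/setP => e; rewrite !inE /dhead; case eF: (e \in F) => //=.
  by case: (o e); rewrite // K_closed.
rewrite -sum1dep_card (partition_big (dhead o) (mem K)) => [|e /andP[]//].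
apply: eq_bigr => v vK; rewrite /indeg /in_edges -sum1dep_card; apply: eq_bigl => e.
by case: (e \in F); case: eqP => [->|]; rewrite ?vK ?andbF.
Qed.

Lemma orientation_even_off z :
  (forall K, K \in comps ends F -> odd #|comp_edges ends F K| -> z \in K) ->
  exists o, forall v, v != z -> ~~ odd (indeg o v).
Proof.
move=> odd_z; pose odd_off o := [set v | odd (indeg o v)] :\ z.
have [o _ o_min] :=
  @arg_minnP _ ([ffun=> true] : {ffun E -> bool}) predT (fun o => #|odd_off o|) isT.
exists o => x xz; apply/negP => x_odd.
have x_off : x \in odd_off o by rewrite !inE xz x_odd.
have no_flip y : connect (adj_in ends setT F) x y -> y != x ->
    (y == z) || odd (indeg o y) -> False.
  move=> /(connect_reorient o)[o' Ho'] yx y_odd.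
  have : odd_off o' \subset odd_off o :\ x.
    apply/subsetP => v; rewrite !inE Ho' => /andP[vz].
    case: (eqVneq v x) => [->|vx]; first by rewrite x_odd eq_sym (negbTE yx).
    case: (eqVneq v y) => [vy|]; last by rewrite vz !addbF.
    by move: y_odd vz; rewrite vy; case: (y == z); case: (odd _).
  move/subset_leq_card; have := cardsD1 x (odd_off o); rewrite x_off.
  have := o_min o' isT; lia.
pose K := comp_of ends F x.
have K_even v : v \in K -> v != x -> ~~ odd (indeg o v).
  by rewrite inE => xv vx; apply/negP => v_odd; apply: (no_flip v xv vx); rewrite v_odd orbT.
have : odd #|comp_edges ends F K|.
  rewrite -(sum_indeg o (fun e eF => comp_of_ends ends x eF)).
  rewrite (bigD1 x (mem_comp_of ends F x)) /=.
  rewrite oddD x_odd; apply/negbT/negbTE; elim/big_ind: _ => //.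
    by move=> a b; rewrite oddD => /negbTE-> /negbTE->.
  by move=> v /andP[vK vx]; apply: K_even.
have K_comp : K \in comps ends F by apply/imsetP; exists x.
move/(odd_z K K_comp); rewrite inE => xz'.
by apply: (no_flip z xz'); rewrite ?eqxx // eq_sym.
Qed.

End Orientation.

Section Partition.
Variables (V E : finType) (ends : E -> V * V) (T : {set E}).
Variables (z : V) (o : {ffun E -> bool}).
Hypotheses (G_cubic : cubic ends) (T_span : spanning_tree ends T) (V_gt2 : 2 < #|V|).
Local Notation F := (cotree T).
Hypothesis z_not_leaf : ~~ leaf ends F z.
Hypothesis even_off_z : forall v, v != z -> ~~ odd (indeg ends F o v).

Local Notation J := [set v | 0 < indeg ends F o v].

Lemma heads_indeg v : v \in J -> v != z -> 1 < indeg ends F o v.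
Proof.
rewrite inE => v_in /even_off_z; move: v_in; by case: (indeg _ _ _ _) => [|[|n]].
Qed.

Lemma heads_not_cotree_leaf v : v \in J -> ~~ leaf ends F v.
Proof.
move=> vJ; case: (eqVneq v z) => [-> //|vz]; rewrite /leaf -ltnNge.
exact: leq_trans (heads_indeg vJ vz) (subset_leq_card (in_edges_sub ends F o v)).
Qed.

Lemma heads_leaf v : v \in J -> leaf ends T v.
Proof. by move/heads_not_cotree_leaf; apply: cubic_leaf_cotree. Qed.

Lemma heads_in_edges v : v \in J -> v != z ->
  in_edges ends F o v = edges_at ends v :&: F.
Proof.
move=> vJ vz; apply/eqP; rewrite eqEcard in_edges_sub /=.
have := cubic_cotree_card_edges_at T_span V_gt2 v G_cubic.
have := heads_indeg vJ vz; rewrite /indeg; lia.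
Qed.

Lemma heads_no_loop e v : v \in J -> ends e <> (v, v).
Proof.
move=> vJ loop_e; have := cubic_loop_card_edges_at G_cubic loop_e.
have := heads_not_cotree_leaf vJ; have := spanning_tree_edges_at T_span V_gt2 v.
rewrite /leaf -(card_edges_at_cotree ends T v); lia.
Qed.

Lemma induced_setC_heads_sub : induced_edges ends (~: J) \subset T.
Proof.
apply/subsetP => e; rewrite inE !in_setC => /andP[aJ bJ]; apply/negPn/negP => eT.
have : dhead ends o e \in J.
  by rewrite inE; apply/card_gt0P; exists e; rewrite /in_edges inE in_setC eT eqxx.
by rewrite /dhead; case: (o e); apply/negP.
Qed.

Lemma induced_heads_sub e : e \in induced_edges ends J ->
  z \in J /\ e \in (edges_at ends z :&: F) :\: in_edges ends F o z.
Proof.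
rewrite [e \in _]inE => /andP[aJ bJ].
have eF : e \in F.
  rewrite in_setC; apply/negP => eT.
  apply: (spanning_tree_adjacent_leaves T_span V_gt2 eT (joins_ends ends e)).
    exact: heads_leaf aJ.
  exact: heads_leaf bJ.
have e_joins := joins_dtail_dhead ends o e; set t := dtail ends o e in e_joins.
have tJ : t \in J by rewrite /t /dtail; case: (o e).
have e_out : e \notin in_edges ends F o t.
  rewrite /in_edges inE eF /=; apply/eqP => ht; apply: (heads_no_loop (e := e) tJ).
  by move: e_joins; rewrite ht /joins orbb => /eqP.
have e_at : e \in edges_at ends t :&: F by rewrite in_setI eF (joins_edges_atl e_joins).
have tz : t = z.
  by apply/eqP; apply: contraNT e_out => tz; rewrite heads_in_edges.
by rewrite -tz; split => //; rewrite in_setD e_out.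
Qed.

Lemma heads_independent_or_near : independent ends J \/ near_independent ends J.
Proof.
suff : #|induced_edges ends J| <= 1.
  rewrite /independent /near_independent leq_eqVlt ltnS leqn0 cards_eq0.
  by case/orP => /eqP; [right | left].
case: (set_0Vmem (induced_edges ends J)) => [-> | [e0 /induced_heads_sub[zJ _]]].
  by rewrite cards0.
have sub : induced_edges ends J \subset (edges_at ends z :&: F) :\: in_edges ends F o z.
  by apply/subsetP => e /induced_heads_sub[].
apply: leq_trans (subset_leq_card sub) _.
rewrite cardsD (setIidPr (in_edges_sub ends F o z)).
have := cubic_cotree_card_edges_at T_span V_gt2 z G_cubic.
move: zJ; rewrite inE /indeg; lia.
Qed.

Lemma decycling_partition_heads :
  induced_tree ends (~: J) /\ (independent ends J \/ near_independent ends J).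
Proof.
split; last exact: heads_independent_or_near.
apply: (induced_tree_setC_leaves T_span V_gt2); last exact: induced_setC_heads_sub.
by move=> v; apply: heads_leaf.
Qed.

End Partition.

Theorem corollary3 (V E : finType) (ends : E -> V * V) :
  connected ends -> cubic ends -> #|V| %% 4 = 0 ->
  (exists T : {set E}, xuong_tree ends T /\
     exists C : {set V}, odd_comps ends (cotree T) = [set C] /\
       3 <= #|comp_edges ends (cotree T) C|) ->
  exists A J : {set V},
    [/\ A :&: J = set0, A :|: J = setT, induced_tree ends A &
        independent ends J \/ near_independent ends J].
Proof.
move=> G_conn G_cubic V_4 [T [[T_span _] [C [oddC C_ge3]]]].
have V_gt2 : 2 < #|V|.
  have : 0 < #|V| by case: G_conn => /set0Pn[v _] _; apply/card_gt0P; exists v.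
  lia.
have odd_comp_eqC K :
    K \in comps ends (cotree T) -> odd #|comp_edges ends (cotree T) K| -> K = C.
  by move=> K_comp K_odd; apply/set1P; rewrite -oddC inE K_comp.
have C_comp : C \in comps ends (cotree T).
  have : C \in odd_comps ends (cotree T) by rewrite oddC set11.
  by rewrite inE => /andP[].
have /exists_inP[z zC z_not_leaf] : [exists z in C, ~~ leaf ends (cotree T) z].
  apply: contraLR C_ge3 => /exists_inPn C_leaves; rewrite -ltnNge ltnS.
  apply: leq_trans (comps_leaves_card_edges C_comp _) _ => // v /C_leaves.
  exact: negbNE.
have [o even_o] : exists o, forall v, v != z -> ~~ odd (indeg ends (cotree T) o v).
  by apply: orientation_even_off => K K_comp K_odd; rewrite (odd_comp_eqC K K_comp K_odd).
have [A_tree J_indep] := decycling_partition_heads G_cubic T_span V_gt2 z_not_leaf even_o.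
exists (~: [set v | 0 < indeg ends (cotree T) o v]), [set v | 0 < indeg ends (cotree T) o v].
by split=> //; [rewrite setIC setICr | rewrite setUC setUCr].
Qed.
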